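(* Let $N\ge1$, $W,N_0,P_A,P^{max}>0$ and for $i=1,\dots,N$ let $D_i,\zeta_i,h_i,g_i>0$. Consider the problem: minimize $\tau_0+\sum_{i=1}^N\tau_{S_i}$ over $\tau_0,\tau_{S_i},P_{S_i}\ge0$ subject to, for all $i$, $P_{S_i}\tau_{S_i}\le\zeta_iP_Ah_i\tau_0$, $\tau_{S_i}W\log_2\left(1+\frac{P_{S_i}g_i}{WN_0}\right)\ge D_i$, and $P_{S_i}\le P^{max}$. For each $i$ let $\ddot\tau_0^i=\frac{P^{max}}{\zeta_iP_Ah_i}\cdot\frac{D_i}{W\log_2(1+P^{max}g_i/(WN_0))}$ (the harvesting time for which, with source $i$ alone, all three constraints hold with equality), and let $\ddot\tau_0^{max}=\max_{i=1,\dots,N}\ddot\tau_0^i$. Then $\ddot\tau_0^{max}$ is an upper bound on the optimal value of $\tau_0$ in this problem.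
   Context: Multiple source wireless powered network: all sources harvest energy from an AP of power $P_A$ during a common time $\tau_0$ (source $i$ harvests $\zeta_iP_Ah_i\tau_0$), then each source $i$ transmits $D_i$ bits in its own slot of length $\tau_{S_i}$ with power $P_{S_i}\le P^{max}$ over an AWGN channel of gain $g_i$. *)

(* concrete reals R. Sources are indexed by i = 0..N-1. *)
From Stdlib Require Import Reals List.
Import ListNotations.
Open Scope R_scope.

Definition log2 (x : R) : R := ln x / ln 2.

Definition sumN (N : nat) (f : nat -> R) : R :=
  fold_right Rplus 0 (map f (seq 0 N)).
(* max with base 0; for N >= 1 and f i > 0 this is the true maximum *)
Definition maxN (N : nat) (f : nat -> R) : R :=
  fold_right Rmax 0 (map f (seq 0 N)).

Definition rate (W N0 : R) (g : nat -> R) (i : nat) (P : R) : R :=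
  W * log2 (1 + P * g i / (W * N0)).

Definition feasible (N : nat) (W N0 PA Pmax : R) (D zeta h g : nat -> R)
    (tau0 : R) (tauS PS : nat -> R) : Prop :=
  0 <= tau0 /\
  forall i, (i < N)%nat ->
    0 <= tauS i /\ 0 <= PS i /\
    PS i * tauS i <= zeta i * PA * h i * tau0 /\
    tauS i * rate W N0 g i (PS i) >= D i /\
    PS i <= Pmax.

Definition objective (N : nat) (tau0 : R) (tauS : nat -> R) : R :=
  tau0 + sumN N tauS.

Definition optimal (N : nat) (W N0 PA Pmax : R) (D zeta h g : nat -> R)
    (tau0 : R) (tauS PS : nat -> R) : Prop :=
  feasible N W N0 PA Pmax D zeta h g tau0 tauS PS /\
  forall tau0' tauS' PS',
    feasible N W N0 PA Pmax D zeta h g tau0' tauS' PS' ->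
    objective N tau0 tauS <= objective N tau0' tauS'.

Definition tau0dd (W N0 PA Pmax : R) (D zeta h g : nat -> R) (i : nat) : R :=
  Pmax / (zeta i * PA * h i) * (D i / rate W N0 g i Pmax).

Definition tau0dd_max (N : nat) (W N0 PA Pmax : R) (D zeta h g : nat -> R) : R :=
  maxN N (tau0dd W N0 PA Pmax D zeta h g).

(* The point that harvests for tau0dd_max and lets every source transmit at
   full power Pmax for the shortest admissible time D_i / rate_i(Pmax) is
   feasible: source i only needs tau0dd_i <= tau0dd_max units of harvesting.
   Since the rate is increasing in the power, no feasible point has shorter
   transmission slots. Comparing objectives with this point, an optimal tau0
   cannot exceed tau0dd_max. *)
From Stdlib Require Import Reals Lra Lia List.
(* After Reals, whose own [maxN] would otherwise shadow the one of Defs. *)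
From Pilot Require Import Defs.
Open Scope R_scope.

Lemma sumN_le (N : nat) (f g : nat -> R) :
  (forall i, (i < N)%nat -> f i <= g i) -> sumN N f <= sumN N g.
Proof.
  intros Hfg. unfold sumN.
  assert (Hin : forall i, In i (seq 0 N) -> f i <= g i)
    by (intros i Hi; apply in_seq in Hi; apply Hfg; lia).
  revert Hin. induction (seq 0 N) as [|a l IH]; intros Hin; simpl; [lra|].
  pose proof (Hin a (or_introl eq_refl)).
  pose proof (IH (fun i Hi => Hin i (or_intror Hi))).
  lra.
Qed.

Lemma maxN_ge (N : nat) (f : nat -> R) (i : nat) :
  (i < N)%nat -> f i <= maxN N f.
Proof.
  intros Hi. unfold maxN.
  assert (Hin : In i (seq 0 N)) by (apply in_seq; lia).
  revert Hin. induction (seq 0 N) as [|a l IH]; simpl; [tauto|].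
  intros [<- | Hin].
  - apply Rmax_l.
  - eapply Rle_trans; [apply IH, Hin | apply Rmax_r].
Qed.

Lemma maxN_nonneg (N : nat) (f : nat -> R) : 0 <= maxN N f.
Proof.
  unfold maxN. induction (seq 0 N) as [|a l IH]; simpl; [lra|].
  eapply Rle_trans; [apply IH | apply Rmax_r].
Qed.

Lemma ln_le (x y : R) : 0 < x -> x <= y -> ln x <= ln y.
Proof.
  intros Hx [Hxy | <-]; [left; apply ln_increasing | right]; auto.
Qed.

Lemma ln_pos (x : R) : 1 < x -> 0 < ln x.
Proof. intros Hx. rewrite <- ln_1. apply ln_increasing; lra. Qed.

Section Rate.

Variables (W N0 : R) (g : nat -> R) (i : nat).
Hypotheses (HW : 0 < W) (HN0 : 0 < N0) (Hg : 0 < g i).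

Lemma rate_pos (P : R) : 0 < P -> 0 < rate W N0 g i P.
Proof.
  intros HP. unfold rate, log2.
  apply Rmult_lt_0_compat; [exact HW|].
  apply Rdiv_lt_0_compat; apply ln_pos; [|lra].
  assert (0 < P * g i / (W * N0))
    by (apply Rdiv_lt_0_compat; apply Rmult_lt_0_compat; assumption).
  lra.
Qed.

Lemma rate_le (P Q : R) : 0 <= P -> P <= Q -> rate W N0 g i P <= rate W N0 g i Q.
Proof.
  intros HP HPQ. unfold rate, log2, Rdiv.
  assert (Hinv : 0 <= / (W * N0))
    by (left; apply Rinv_0_lt_compat, Rmult_lt_0_compat; assumption).
  assert (Hln2 : 0 <= / ln 2) by (left; apply Rinv_0_lt_compat, ln_pos; lra).
  assert (HPg : P * g i <= Q * g i) by (apply Rmult_le_compat_r; lra).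
  assert (HPgN : 0 <= P * g i * / (W * N0))
    by (apply Rmult_le_pos; [apply Rmult_le_pos|]; lra).
  apply Rmult_le_compat_l; [lra|].
  apply Rmult_le_compat_r; [exact Hln2|].
  apply ln_le; [lra|].
  apply Rplus_le_compat_l, Rmult_le_compat_r; assumption.
Qed.

End Rate.

Section HarvestThenTransmit.

Variables (N : nat) (W N0 PA Pmax : R) (D zeta h g : nat -> R).
Hypotheses (HW : 0 < W) (HN0 : 0 < N0) (HPA : 0 < PA) (HPmax : 0 < Pmax).
Hypothesis Hsrc :
  forall i, (i < N)%nat -> 0 < D i /\ 0 < zeta i /\ 0 < h i /\ 0 < g i.

Definition tauSdd (i : nat) : R := D i / rate W N0 g i Pmax.

Lemma feasible_tauSdd_le (tau0 : R) (tauS PS : nat -> R) (i : nat) :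
  feasible N W N0 PA Pmax D zeta h g tau0 tauS PS -> (i < N)%nat ->
  tauSdd i <= tauS i.
Proof.
  intros [_ Hfeas] Hi.
  destruct (Hfeas i Hi) as (HtauS & HPS & _ & Hbits & HPSmax).
  destruct (Hsrc i Hi) as (_ & _ & _ & Hg).
  assert (Hr : 0 < rate W N0 g i Pmax) by (apply rate_pos; assumption).
  assert (Hbits_max : D i <= tauS i * rate W N0 g i Pmax).
  { eapply Rle_trans; [apply Rge_le, Hbits|].
    apply Rmult_le_compat_l; [exact HtauS|].
    apply rate_le; assumption. }
  unfold tauSdd. apply (Rmult_le_reg_r (rate W N0 g i Pmax)); [exact Hr|].
  replace (D i / rate W N0 g i Pmax * rate W N0 g i Pmax) with (D i)
    by (field; lra).
  exact Hbits_max.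
Qed.

Lemma tau0dd_harvest_eq (i : nat) : (i < N)%nat ->
  zeta i * PA * h i * tau0dd W N0 PA Pmax D zeta h g i = Pmax * tauSdd i.
Proof.
  intros Hi. destruct (Hsrc i Hi) as (_ & Hzeta & Hh & Hg).
  assert (0 < rate W N0 g i Pmax) by (apply rate_pos; assumption).
  assert (0 < zeta i * PA * h i)
    by (repeat apply Rmult_lt_0_compat; assumption).
  unfold tau0dd, tauSdd. field. lra.
Qed.

Lemma feasible_tau0dd_max :
  feasible N W N0 PA Pmax D zeta h g
    (tau0dd_max N W N0 PA Pmax D zeta h g) tauSdd (fun _ => Pmax).
Proof.
  split; [apply maxN_nonneg|].
  intros i Hi. destruct (Hsrc i Hi) as (HD & Hzeta & Hh & Hg).
  assert (Hr : 0 < rate W N0 g i Pmax) by (apply rate_pos; assumption).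
  repeat split; cbv beta.
  - left. apply Rdiv_lt_0_compat; assumption.
  - lra.
  - rewrite <- tau0dd_harvest_eq by exact Hi.
    apply Rmult_le_compat_l.
    + left. repeat apply Rmult_lt_0_compat; assumption.
    + apply maxN_ge, Hi.
  - right. unfold tauSdd. field. lra.
  - lra.
Qed.

End HarvestThenTransmit.

Theorem lemma5 (N : nat) (W N0 PA Pmax : R) (D zeta h g : nat -> R) :
  (1 <= N)%nat ->
  0 < W -> 0 < N0 -> 0 < PA -> 0 < Pmax ->
  (forall i, (i < N)%nat -> 0 < D i /\ 0 < zeta i /\ 0 < h i /\ 0 < g i) ->
  forall (tau0 : R) (tauS PS : nat -> R),
    optimal N W N0 PA Pmax D zeta h g tau0 tauS PS ->
    tau0 <= tau0dd_max N W N0 PA Pmax D zeta h g.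
Proof.
  intros _ HW HN0 HPA HPmax Hsrc tau0 tauS PS [Hfeas Hopt].
  assert (Hobj := Hopt _ _ _ (feasible_tau0dd_max N W N0 PA Pmax D zeta h g
                                HW HN0 HPA HPmax Hsrc)).
  assert (Hslots : sumN N (tauSdd W N0 Pmax D g) <= sumN N tauS).
  { apply sumN_le. intros i Hi.
    exact (feasible_tauSdd_le N W N0 PA Pmax D zeta h g HW HN0 HPmax Hsrc
             tau0 tauS PS i Hfeas Hi). }
  unfold objective in Hobj. lra.
Qed.
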